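(* If $X$ is a crowded submaximal space, then $X$ has no weakly converging sequences.
   Context: A space is crowded if it is non-empty and has no isolated points. A space is submaximal if every dense subset of it is open. A weakly converging sequence in $X$ is a countably infinite family $\mathcal S=\{S_n:n\in\omega\}$ of pairwise disjoint non-empty finite subsets of $X$ for which there is a point $x\in X$ such that for every neighborhood $W$ of $x$ there is a finite set $F\subseteq\omega$ with $S_n\cap W\neq\emptyset$ for all $n\in\omega\setminus F$. *)

From HB Require Import structures.
From mathcomp Require Import all_boot all_order.
From mathcomp Require Import all_classical all_reals all_analysis.
Set Implicit Arguments. Unset Strict Implicit. Unset Printing Implicit Defensive.
Local Open Scope classical_set_scope.

Definition crowded (X : topologicalType) : Prop :=
  [set: X] !=set0 /\ forall x : X, ~ isolated [set: X] x.

Definition submaximal (X : topologicalType) : Prop :=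
  forall D : set X, dense D -> open D.

Definition weakly_converging_sequence (X : topologicalType)
    (S : nat -> set X) : Prop :=
  (forall n m, n <> m -> S n `&` S m = set0) /\
  (forall n, S n !=set0) /\
  (forall n, finite_set (S n)) /\
  exists x : X, forall W : set X, nbhs x W ->
    exists F : set nat, finite_set F /\
      forall n, ~ F n -> S n `&` W !=set0.

(* In a submaximal space without isolated points, finite sets have empty
   interior and A `\` A° is closed for every A.  Let S weakly converge to x and
   put O_N := interior of (\bigcup_(n in N) S n) minus x.  The closed set
   (\bigcup_(n in N) S n `\ x) `\` O_N misses x, so its complement is a
   neighbourhood of x, and all but finitely many S n with n in N meet O_N.
   On the other hand O_(G `|` A) and O_(G `|` B) are disjoint when G is finite
   and A, B are disjoint, since their intersection is an open subset of the
   finite set \bigcup_(n in G) S n.  Repeatedly splitting an infinite set of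
   indices into evens and odds, one builds an infinite N = {k_0, k_1, ...} such
   that no S k_j meets O_N, a contradiction. *)

From mathcomp Require Import all_boot all_order.
From mathcomp Require Import all_classical all_reals all_analysis.
Set Implicit Arguments. Unset Strict Implicit. Unset Printing Implicit Defensive.
Local Open Scope classical_set_scope.

Section DenseComplement.
Context {T : topologicalType}.

Lemma dense_setC (A : set T) : dense (~` A) <-> A° = set0.
Proof.
split=> [dA | A0 O [y Oy] oO].
  apply/seteqP; split=> // y Ay.
  by have [z [/interior_subset]] := dA _ (ex_intro _ y Ay) (@open_interior _ A).
apply/set0P/eqP => OA.
have : O `<=` A° by rewrite -open_subsetE // subsets_disjoint.
by rewrite A0 => /(_ y Oy).
Qed.

Lemma interior_setD_interior (A : set T) : (A `\` A°)° = set0.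
Proof.
apply/seteqP; split=> // y Dy.
have [_] := interior_subset Dy; apply.
by apply: interiorS Dy; exact: subDsetl.
Qed.

Lemma dense_setC1 (z : T) : ~ isolated [set: T] z -> dense (~` [set z]).
Proof.
move=> zNiso; apply/dense_setC/seteqP; split=> // y zy; apply: zNiso.
have yz : y = z := interior_subset zy; subst y.
by split; [rewrite inE | exists [set z]; [exact: zy | exact: setIT]].
Qed.

End DenseComplement.

Section Submaximal.
Context {X : topologicalType}.
Hypothesis submaxX : submaximal X.

Lemma submaximal_closed (A : set X) : A° = set0 -> closed A.
Proof. by move=> A0; rewrite -openC; apply: submaxX; apply/dense_setC. Qed.

Lemma submaximal_closed_setD_interior (A : set X) : closed (A `\` A°).
Proof. by apply: submaximal_closed; exact: interior_setD_interior. Qed.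

Hypothesis noisolatedX : forall z : X, ~ isolated [set: X] z.

Lemma interior_finite_set (Y : set X) : finite_set Y -> Y° = set0.
Proof.
move=> /finite_seqP[s ->]; apply/dense_setC; elim: s => [|z s IH].
  by rewrite set_nil setC0 => O O0 _; rewrite setIT.
have -> : ~` [set` z :: s] = ~` [set z] `&` ~` [set` s].
  apply/seteqP; split=> y /=; rewrite in_cons.
    by move=> zs; split=> [yz|ys]; apply: zs; rewrite ?yz ?eqxx ?ys ?orbT.
  by move=> [yz ys] /orP[/eqP|].
by apply: denseI => //; [apply: submaxX |]; exact: dense_setC1.
Qed.

End Submaximal.

Section WeaklyConvergingSequence.
Context {X : topologicalType} {S : nat -> set X} (x : X).
Hypothesis submaxX : submaximal X.
Hypothesis noisolatedX : forall z : X, ~ isolated [set: X] z.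
Hypothesis S_disj : forall n m, n <> m -> S n `&` S m = set0.
Hypothesis S_finite : forall n, finite_set (S n).

(* Removing x keeps x out of the closed set [Sunion N `\` (Sunion N)°]. *)
Definition Sunion (N : set nat) : set X := \bigcup_(n in N) S n `\ x.

Lemma SunionS (N M : set nat) : N `<=` M -> Sunion N `<=` Sunion M.
Proof. by move=> NM y [[n Nn Sny] yx]; split=> //; exists n; [exact: NM|]. Qed.

Lemma interior_Sunion_disjoint (G A B : set nat) : finite_set G ->
  A `&` B = set0 -> (Sunion (G `|` A))° `&` (Sunion (G `|` B))° = set0.
Proof.
move=> Gfin AB; rewrite -subset0.
have GSfin : finite_set (\bigcup_(n in G) S n) by apply: bigcup_finite.
rewrite -(interior_finite_set submaxX noisolatedX GSfin) -open_subsetE; last first.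
  by apply: openI; exact: open_interior.
move=> z [/interior_subset [[n An Snz] _] /interior_subset [[m Bm Smz] _]].
have nm : n = m.
  by apply: contrapT => /S_disj /seteqP[/(_ z (conj Snz Smz))].
subst m; exists n => //.
case: An => // An; case: Bm => // Bn.
by have : (A `&` B) n by []; rewrite AB.
Qed.

Lemma finite_indices (y : X) : finite_set [set n | S n y].
Proof.
have [[n Sny] | noS] := pselect (exists n, S n y).
  apply: (sub_finite_set _ (finite_set1 n)) => m /= Smy.
  by apply: contrapT => /S_disj /seteqP[/(_ y (conj Smy Sny))].
rewrite (_ : [set n | S n y] = set0) ?finite_set0 //.
by apply/seteqP; split=> // n Sny; apply: noS; exists n.
Qed.

Lemma subsequence_avoiding_point (G : set nat) (f : nat -> nat) (y : X) :
  finite_set G -> injective f ->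
  exists h : nat -> nat, injective h /\ ~ (Sunion (G `|` range (f \o h)))° y.
Proof.
move=> Gfin fI.
have evenNodd : range (f \o double) `&` range (f \o (succn \o double)) = set0.
  apply/seteqP; split=> // _ [[a _ <-] [b _ /fI /(congr1 odd)]].
  by rewrite /= !odd_double.
have [yE | yNE] := pselect ((Sunion (G `|` range (f \o double)))° y).
  exists (succn \o double); split; first exact: (inj_comp succn_inj double_inj).
  move=> yO; have := interior_Sunion_disjoint Gfin evenNodd.
  by move=> /seteqP[/(_ y (conj yE yO))].
by exists double; split; first exact: double_inj.
Qed.

Lemma subsequence_avoiding_seq (G : set nat) (f : nat -> nat) (ys : seq X) :
  finite_set G -> injective f -> exists h : nat -> nat,
    injective h /\ forall y, y \in ys -> ~ (Sunion (G `|` range (f \o h)))° y.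
Proof.
move=> Gfin fI; elim: ys => [|y ys [h [hI hys]]].
  by exists id; split; first exact: inj_id.
have [h' [h'I yh']] := subsequence_avoiding_point y Gfin (inj_comp fI hI).
exists (h \o h'); split; first exact: inj_comp.
move=> z; rewrite in_cons => /predU1P[-> //|zys].
apply: contra_not (hys z zys); apply: interiorS; apply: SunionS; apply: setUS.
by move=> _ [n _ <-]; exists (h' n).
Qed.

(* A stage (G, f) lists the chosen indices k_(j-1), ..., k_0 in G and keeps the
   indices still available as the range of f; the next index is f 0. *)
Definition next_stage (p q : seq nat * (nat -> nat)) :=
  [/\ q.1 = p.2 0 :: p.1, injective q.2, range q.2 `<=` range (p.2 \o succn) &
      S (p.2 0) `&` (Sunion ([set` q.1] `|` range q.2))° = set0].

Lemma next_stage_exists p : injective p.2 -> exists q, next_stage p q.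
Proof.
case: p => G f /= fI; have [ys Sys] := (finite_seqP _).1 (S_finite (f 0)).
have Gfin : finite_set [set` f 0 :: G] by apply/finite_seqP; exists (f 0 :: G).
have [h [hI hys]] := subsequence_avoiding_seq ys Gfin (inj_comp fI succn_inj).
exists (f 0 :: G, f \o succn \o h); split=> //=.
- exact: inj_comp (inj_comp fI succn_inj) hI.
- by move=> _ [n _ <-]; exists (h n).
- by apply/seteqP; split=> // y []; rewrite Sys => /hys.
Qed.

Section Construction.
Variable next : seq nat * (nat -> nat) -> seq nat * (nat -> nat).
Hypothesis nextP : forall p, injective p.2 -> next_stage p (next p).

Let stage n := iter n next ([::], id).
Let k n := (stage n).2 0.

Lemma stage_inj n : injective (stage n).2.
Proof. by elim: n => [|n IH]; [exact: inj_id | case: (nextP IH)]. Qed.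

Lemma range_stage_le i j : (i <= j)%N -> range (stage j).2 `<=` range (stage i).2.
Proof.
move=> /subnK <-; elim: (j - i)%N => [//|d IH]; rewrite addSn.
have [_ _ sub _] := nextP (@stage_inj (d + i)).
by apply: subset_trans sub _ => _ [n _ <-]; apply: IH; exists n.+1.
Qed.

Lemma k_inj : injective k.
Proof.
suff kN i j : (i < j)%N -> k j <> k i.
  by move=> i j kij; case: (ltngtP i j) => // /kN; rewrite kij => /(_ erefl).
move=> ij; have [_ _ sub _] := nextP (@stage_inj i).
have : range (stage j).2 (k j) by exists 0.
by move=> /(range_stage_le ij) /sub [n _ <-] /stage_inj.
Qed.

Lemma mem_stage_k i j : (i < j)%N -> k i \in (stage j).1.
Proof.
elim: j => // j IH; have [-> _ _ _] := nextP (@stage_inj j).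
by rewrite ltnS leq_eqVlt in_cons => /predU1P[->|/IH ->]; rewrite ?eqxx ?orbT.
Qed.

Lemma range_k_stage j : range k `<=` [set` (stage j).1] `|` range (stage j).2.
Proof.
move=> _ [i _ <-]; case: (ltnP i j) => [ij|ji]; first by left; exact: mem_stage_k.
by right; apply: (range_stage_le ji); exists 0.
Qed.

Lemma k_avoids j : S (k j) `&` (Sunion (range k))° = set0.
Proof.
have [_ _ _ avoid] := nextP (@stage_inj j).
apply/seteqP; split=> // y [Sy ky]; rewrite -avoid; split=> //.
by apply: interiorS ky; apply: SunionS; exact: (range_k_stage j.+1).
Qed.

Lemma avoiding_injection_of_next : exists k : nat -> nat,
  injective k /\ forall j, S (k j) `&` (Sunion (range k))° = set0.
Proof. by exists k; split; [exact: k_inj | exact: k_avoids]. Qed.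

End Construction.

Lemma avoiding_injection : exists k : nat -> nat,
  injective k /\ forall j, S (k j) `&` (Sunion (range k))° = set0.
Proof.
have /choice[next nextP] : forall p : seq nat * (nat -> nat),
    exists q, injective p.2 -> next_stage p q.
  move=> p; have [pI|pNI] := pselect (injective p.2); last by exists p => /pNI.
  by have [q] := next_stage_exists pI; exists q.
exact: avoiding_injection_of_next nextP.
Qed.

Hypothesis S_cvg : forall W, nbhs x W ->
  exists F, finite_set F /\ forall n, ~ F n -> S n `&` W !=set0.

Lemma S_meets_interior_Sunion (N : set nat) : exists F, finite_set F /\
  forall n, N n -> ~ F n -> S n `&` (Sunion N)° !=set0.
Proof.
pose C := Sunion N `\` (Sunion N)°.
have Cx : (~` C) x by move=> [[_ /(_ erefl)]].
have oC : open (~` C) by rewrite openC; exact: submaximal_closed_setD_interior.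
have [F [Ffin FS]] := S_cvg (open_nbhs_nbhs (conj oC Cx)).
exists (F `|` [set n | S n x]); split.
  by rewrite finite_setU; split; last exact: finite_indices.
move=> n Nn /not_orP[Fn Snx]; have [z [Snz Cz]] := FS n Fn.
exists z; split=> //; apply: contrapT => zO; apply: Cz; split=> //; split.
  by exists n.
by move=> zx; apply: Snx; rewrite -zx.
Qed.

Lemma no_avoiding_injection (k : nat -> nat) : injective k ->
  ~ (forall j, S (k j) `&` (Sunion (range k))° = set0).
Proof.
move=> kI avoid; have [F [Ffin FS]] := S_meets_interior_Sunion (range k).
have [j /= nFkj] : ~` (k @^-1` F) !=set0.
  apply: infinite_setN0; apply: cofinite_set_infinite; first exact: infinite_nat.
  by rewrite setCK; apply: finite_preimage => // ? ? ? ? /kI.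
have kj : range k (k j) by exists j.
by have [z] := FS (k j) kj nFkj; rewrite avoid.
Qed.

End WeaklyConvergingSequence.

Theorem mainTheorem3 (X : topologicalType) :
  crowded X -> submaximal X ->
  ~ exists S : nat -> set X, weakly_converging_sequence S.
Proof.
move=> [_ noisolatedX] submaxX [S [S_disj [_ [S_finite [x S_cvg]]]]].
have [k [kI avoid]] := avoiding_injection x submaxX noisolatedX S_disj S_finite.
exact: (no_avoiding_injection submaxX S_disj S_cvg kI avoid).
Qed.
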